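(* Let $\delta_1,\delta_2\in(0,1)$, $a_1,a_2\in(0,1)$ and $\varepsilon\in\mathbb{R}$ satisfy $$\mathrm{e}^{\varepsilon}\frac{a_1}{1-a_1}=\frac{1-\delta_1}{1-\delta_2}\,\frac{a_2}{1-a_2}.$$ Then for all positive integers $x,y$, $$\mathbb{E}\big[\exp(\varepsilon H^{(a_1,a_2)}(x,y))\big]=\big(\mathrm{e}^{\varepsilon}a_1+(1-a_1)\big)^y\big(\mathrm{e}^{-\varepsilon}a_2+(1-a_2)\big)^x .$$
   Context: Stochastic six vertex (S6V) model: vertices $(i,j)\in\mathbb{Z}_{>0}^2$, each with incoming edges from the left and from below and outgoing edges to the right and upward. Boundary data specify which edges $(0,j)\to(1,j)$ ($j\ge1$) and $(i,0)\to(i,1)$ ($i\ge1$) carry an incoming arrow. Vertices are sampled successively on antidiagonals $i+j=n$, independently given incoming arrows: none in gives none out; two in gives both out; a single arrow from below exits up with probability $\delta_1$, right with probability $1-\delta_1$; a single arrow from the left exits right with probability $\delta_2$, up with probability $1-\delta_2$. The height function $H(x,y)$ is the net number of arrows crossing the segment from $(0,0)$ to $(x+\epsilon,y+\epsilon)$ (small $\epsilon>0$), left-to-right crossings counting $+1$ and right-to-left $-1$. $(a_1,a_2)$ two-sided Bernoulli initial data: boundary arrows independent, present with probability $a_1$ on each edge $(0,j)\to(1,j)$ and with probability $a_2$ on each edge $(i,0)\to(i,1)$; $H^{(a_1,a_2)}$ is the corresponding height function. *)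

From HB Require Import structures.
From mathcomp Require Import all_boot all_order all_algebra.
From mathcomp Require Import reals.
From mathcomp Require Import sequences exp.
Set Implicit Arguments. Unset Strict Implicit. Unset Printing Implicit Defensive.
Import Order.TTheory GRing.Theory Num.Theory.
Local Open Scope ring_scope.

(* Stochastic six vertex model restricted to the box {1..x} x {1..y}.
   Indices are 0-based: vertex (i,j) of the paper (1 <= i <= x, 1 <= j <= y)
   is the pair (i-1, j-1) : 'I_x * 'I_y.  Since arrows only travel up and right,
   the arrows in this box (and hence H(x,y)) depend only on the boundary edges
   (0,j)->(1,j) with j <= y, (i,0)->(i,1) with i <= x and the vertices of the box,
   and the joint law of these is the product of the boundary Bernoulli weights
   and the vertex transition probabilities (sequential sampling). *)

Definition getf (n : nat) (A : Type) (d : A) (f : {ffun 'I_n -> A}) (k : nat) : A :=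
  if @insub nat (fun k => k < n)%N 'I_n k is Some k' then f k' else d.

(* A configuration of the box: left boundary arrows (row j+1), bottom boundary
   arrows (column i+1), and for every vertex its outgoing arrows (up, right). *)
Definition s6v_config (x y : nat) : finType :=
  ({ffun 'I_y -> bool} * {ffun 'I_x -> bool} * {ffun 'I_x * 'I_y -> bool * bool})%type.

Definition out_at (x y : nat) (c : {ffun 'I_x * 'I_y -> bool * bool}) (i j : nat)
  : bool * bool :=
  if @insub nat (fun k => k < x)%N 'I_x i is Some i' then
    if @insub nat (fun k => k < y)%N 'I_y j is Some j' then c (i', j') else (false, false)
  else (false, false).

Definition in_left (x y : nat) (w : s6v_config x y) (i j : nat) : bool :=
  match i with
  | 0 => getf false w.1.1 j
  | i'.+1 => (out_at w.2 i' j).2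
  end.

Definition in_below (x y : nat) (w : s6v_config x y) (i j : nat) : bool :=
  match j with
  | 0 => getf false w.1.2 i
  | j'.+1 => (out_at w.2 i j').1
  end.

Definition vertex_weight (R : realType) (d1 d2 : R) (below left up right : bool) : R :=
  match below, left, up, right with
  | false, false, false, false => 1
  | true, true, true, true => 1
  | true, false, true, false => d1
  | true, false, false, true => 1 - d1
  | false, true, false, true => d2
  | false, true, true, false => 1 - d2
  | _, _, _, _ => 0
  end.

Definition bern (R : realType) (a : R) (b : bool) : R := if b then a else 1 - a.

Definition s6v_weight (R : realType) (d1 d2 a1 a2 : R) (x y : nat) (w : s6v_config x y) : R :=
  (\prod_(j : 'I_y) bern a1 (w.1.1 j)) * (\prod_(i : 'I_x) bern a2 (w.1.2 i)) *
  \prod_(p : 'I_x * 'I_y)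
     vertex_weight d1 d2 (in_below w p.1 p.2) (in_left w p.1 p.2) (w.2 p).1 (w.2 p).2.

(* Height function H(x,y) (x,y >= 1): net number of arrows crossing a path from
   (0,0) to (x+eps,y+eps); computed along the path that runs just above the
   x-axis to abscissa x+eps and then vertically up to (x+eps,y+eps):
   right arrows leaving column x at rows 1..y cross left-to-right (+1),
   bottom boundary arrows at columns 1..x cross right-to-left (-1). *)
Definition height (x y : nat) (w : s6v_config x y) : int :=
  (\sum_(j < y) ((out_at w.2 x.-1 j).2 : nat))%:Z - (\sum_(i : 'I_x) (w.1.2 i : nat))%:Z.

Definition exp_height_moment (R : realType) (d1 d2 a1 a2 eps : R) (x y : nat) : R :=
  \sum_(w : s6v_config x y) s6v_weight d1 d2 a1 a2 w * expR (eps * (height w)%:~R).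

From HB Require Import structures.
From mathcomp Require Import all_boot all_order all_algebra.
From mathcomp Require Import reals.
From mathcomp Require Import sequences exp.
From mathcomp Require Import ring lra zify.
Set Implicit Arguments. Unset Strict Implicit. Unset Printing Implicit Defensive.
Import Order.TTheory GRing.Theory Num.Theory.
Local Open Scope ring_scope.

(* Weighting every bottom boundary arrow by e^{-eps} turns Ber(a2) into Ber(a2'),
   a2' = e^{-eps} a2 / c with c = e^{-eps} a2 + 1 - a2, at the cost of a factor c^x,
   and the hypothesis on eps says exactly that a1 (1 - a2') (1 - d2) = a2' (1 - a1) (1 - d1).
   Under this balance condition a vertex fed by independent Ber(a2) and Ber(a1) arrows
   from below and from the left emits independent Ber(a2) and Ber(a1) arrows up and to
   the right (Burke property).  Sweeping up each column and then across the box, the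
   arrows leaving the box to the right are i.i.d. Ber(a1) under the tilted law, so
   E[e^{eps H}] = c^x E[e^{eps #(right exits)}] = c^x (e^eps a1 + 1 - a1)^y. *)

Lemma getfE n (A : Type) (d : A) (f : {ffun 'I_n -> A}) (i : 'I_n) : getf d f i = f i.
Proof. by rewrite /getf valK. Qed.

Lemma getf_default n (A : Type) (d : A) (f : {ffun 'I_n -> A}) k :
  (n <= k)%N -> getf d f k = d.
Proof. by move=> le_nk; rewrite /getf insubN // -leqNgt. Qed.

Definition rcons_ffun n (A : Type) (f : {ffun 'I_n -> A}) (v : A) : {ffun 'I_n.+1 -> A} :=
  [ffun i : 'I_n.+1 => getf v f i].

Lemma rcons_ffun_widen n (A : Type) (f : {ffun 'I_n -> A}) v (i : 'I_n) :
  rcons_ffun f v (widen_ord (leqnSn n) i) = f i.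
Proof. by rewrite ffunE getfE. Qed.

Lemma rcons_ffun_max n (A : Type) (f : {ffun 'I_n -> A}) v : rcons_ffun f v ord_max = v.
Proof. by rewrite ffunE getf_default. Qed.

Lemma getf_rcons_ffun n (A : Type) d (f : {ffun 'I_n -> A}) v k :
  (k < n)%N -> getf d (rcons_ffun f v) k = getf d f k.
Proof.
move=> lt_kn; have -> : k = widen_ord (leqnSn n) (Ordinal lt_kn) by [].
by rewrite !getfE rcons_ffun_widen.
Qed.

Lemma getf_rcons_ffun_last n (A : Type) d (f : {ffun 'I_n -> A}) v :
  getf d (rcons_ffun f v) n = v.
Proof. by rewrite -[n]/(val (@ord_max n)) getfE rcons_ffun_max. Qed.

Lemma big_rcons_ffun (R : nmodType) n (T : finType) (F : {ffun 'I_n.+1 -> T} -> R) :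
  \sum_(g : {ffun 'I_n.+1 -> T}) F g =
  \sum_(f : {ffun 'I_n -> T}) \sum_(v : T) F (rcons_ffun f v).
Proof.
rewrite pair_bigA (reindex (fun p => rcons_ffun p.1 p.2)) //=.
exists (fun g => ([ffun i => g (widen_ord (leqnSn n) i)], g ord_max)) => [[f v] _ | g _].
  by congr (_, _); [apply/ffunP => i; rewrite ffunE rcons_ffun_widen | rewrite rcons_ffun_max].
apply/ffunP => i; have [lt_in | ge_in] := ltnP i n.
  have -> : i = widen_ord (leqnSn n) (Ordinal lt_in) by apply: val_inj.
  by rewrite rcons_ffun_widen ffunE.
have -> : i = ord_max by apply: val_inj; have := ltn_ord i; rewrite /=; lia.
by rewrite rcons_ffun_max.
Qed.

Lemma prod_rcons_ffun (R : pzSemiRingType) n (A : Type) (F : A -> R)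
    (f : {ffun 'I_n -> A}) v :
  \prod_(i < n.+1) F (rcons_ffun f v i) = (\prod_(i < n) F (f i)) * F v.
Proof.
rewrite big_ord_recr rcons_ffun_max; congr (_ * _).
by apply: eq_bigr => i _; rewrite rcons_ffun_widen.
Qed.

Lemma eq_ffun_card0 (aT : finType) (A : Type) (f g : {ffun aT -> A}) : #|aT| = 0%N -> f = g.
Proof. by move=> aT0; apply/ffunP => a; have := card0_eq aT0 a; rewrite inE. Qed.

Lemma big_ffun_card0 (R : nmodType) (aT T : finType) (F : {ffun aT -> T} -> R) f0 :
  #|aT| = 0%N -> \sum_(f : {ffun aT -> T}) F f = F f0.
Proof.
move=> aT0; rewrite (eq_bigr (fun _ => F f0)) => [|f _]; last by rewrite (eq_ffun_card0 f f0).
by rewrite sumr_const card_ffun aT0 expn0.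
Qed.

Definition add_column x y (A : Type) (c : {ffun 'I_x * 'I_y -> A}) (col : {ffun 'I_y -> A})
  : {ffun 'I_x.+1 * 'I_y -> A} :=
  [ffun p => if insub (val p.1) is Some i then c (i, p.2) else col p.2].

Lemma add_column_widen x y (A : Type) (c : {ffun 'I_x * 'I_y -> A}) col (i : 'I_x) j :
  add_column c col (widen_ord (leqnSn x) i, j) = c (i, j).
Proof. by rewrite ffunE /= valK. Qed.

Lemma add_column_max x y (A : Type) (c : {ffun 'I_x * 'I_y -> A}) col j :
  add_column c col (ord_max, j) = col j.
Proof. by rewrite ffunE /= insubN // ltnn. Qed.

Lemma big_add_column (R : nmodType) x y (T : finType) (F : {ffun 'I_x.+1 * 'I_y -> T} -> R) :
  \sum_(g : {ffun 'I_x.+1 * 'I_y -> T}) F g =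
  \sum_(c : {ffun 'I_x * 'I_y -> T}) \sum_(col : {ffun 'I_y -> T}) F (add_column c col).
Proof.
rewrite pair_bigA (reindex (fun p => add_column p.1 p.2)) //=.
exists (fun g => ([ffun p => g (widen_ord (leqnSn x) p.1, p.2)], [ffun j => g (ord_max, j)]))
  => [[c col] _ | g _].
  congr (_, _); apply/ffunP.
    by move=> [i j]; rewrite ffunE add_column_widen.
  by move=> j; rewrite ffunE add_column_max.
apply/ffunP => -[i j]; have [lt_ix | ge_ix] := ltnP i x.
  have -> : i = widen_ord (leqnSn x) (Ordinal lt_ix) by apply: val_inj.
  by rewrite add_column_widen ffunE.
have -> : i = ord_max by apply: val_inj; have := ltn_ord i; rewrite /=; lia.
by rewrite add_column_max ffunE.
Qed.

Lemma out_at_add_column x y (c : {ffun 'I_x * 'I_y -> bool * bool}) col i j :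
  (i < x)%N -> out_at (add_column c col) i j = out_at c i j.
Proof.
move=> lt_ix; have -> : i = widen_ord (leqnSn x) (Ordinal lt_ix) by [].
by rewrite /out_at !valK; case: insub => // j'; rewrite add_column_widen.
Qed.

Lemma out_at_add_column_last x y (c : {ffun 'I_x * 'I_y -> bool * bool}) col j :
  out_at (add_column c col) x j = getf (false, false) col j.
Proof.
rewrite /out_at /getf -[x]/(val (@ord_max x)) valK.
by case: insub => // j'; rewrite add_column_max.
Qed.

Definition bern_prod (R : realType) (a : R) n (r : {ffun 'I_n -> bool}) : R :=
  \prod_(j < n) bern a (r j).

(* A column with bottom input [b] in which vertex [j] emits [o j] = (up, right);
   [column_below b o y] is the arrow leaving the column at the top. *)
Definition column_below y (b : bool) (o : {ffun 'I_y -> bool * bool}) (j : nat) : bool :=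
  if j is j'.+1 then (getf (false, false) o j').1 else b.

Definition column_right y (o : {ffun 'I_y -> bool * bool}) : {ffun 'I_y -> bool} :=
  [ffun j => (o j).2].

Definition column_weight (R : realType) (d1 d2 : R) y (r : {ffun 'I_y -> bool}) (b : bool)
    (o : {ffun 'I_y -> bool * bool}) : R :=
  \prod_(j < y) vertex_weight d1 d2 (column_below b o j) (r j) (o j).1 (o j).2.

Lemma column_below_rcons y b (o : {ffun 'I_y -> bool * bool}) v j :
  (j <= y)%N -> column_below b (rcons_ffun o v) j = column_below b o j.
Proof. by case: j => //= j lt_jy; rewrite getf_rcons_ffun. Qed.

Lemma column_below_rcons_top y b (o : {ffun 'I_y -> bool * bool}) v :
  column_below b (rcons_ffun o v) y.+1 = v.1.
Proof. by rewrite /= getf_rcons_ffun_last. Qed.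

Lemma column_right_rcons y (o : {ffun 'I_y -> bool * bool}) v :
  column_right (rcons_ffun o v) = rcons_ffun (column_right o) v.2.
Proof. by apply/ffunP => j; rewrite !ffunE /getf; case: insub => //= j'; rewrite ffunE. Qed.

Lemma column_weight_rcons (R : realType) (d1 d2 : R) y (r : {ffun 'I_y -> bool}) l b
    (o : {ffun 'I_y -> bool * bool}) v :
  column_weight d1 d2 (rcons_ffun r l) b (rcons_ffun o v) =
  column_weight d1 d2 r b o * vertex_weight d1 d2 (column_below b o y) l v.1 v.2.
Proof.
rewrite /column_weight big_ord_recr /= !rcons_ffun_max column_below_rcons //.
congr (_ * _); apply: eq_bigr => j _.
by rewrite !rcons_ffun_widen column_below_rcons // ltnW.
Qed.

Definition right_outputs x y (w : s6v_config x y) : {ffun 'I_y -> bool} :=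
  [ffun j : 'I_y => in_left w x j].

Lemma right_outputs0 y (w : s6v_config 0 y) : right_outputs w = w.1.1.
Proof. by apply/ffunP => j; rewrite ffunE /= getfE. Qed.

Definition add_column_config x y (w : s6v_config x y) (b : bool)
    (col : {ffun 'I_y -> bool * bool}) : s6v_config x.+1 y :=
  (w.1.1, rcons_ffun w.1.2 b, add_column w.2 col).

Lemma big_s6v_config (R : nmodType) x y (F : s6v_config x y -> R) :
  \sum_(w : s6v_config x y) F w =
  \sum_(l : {ffun 'I_y -> bool}) \sum_(bb : {ffun 'I_x -> bool})
    \sum_(c : {ffun 'I_x * 'I_y -> bool * bool}) F (l, bb, c).
Proof.
transitivity (\sum_(lb : {ffun 'I_y -> bool} * {ffun 'I_x -> bool})
    \sum_(c : {ffun 'I_x * 'I_y -> bool * bool}) F (lb, c)).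
  by rewrite pair_bigA; apply: eq_bigr => -[].
by rewrite [RHS]pair_bigA; apply: eq_bigr => -[].
Qed.

Lemma big_s6v_config_add_column (R : nmodType) x y (F : s6v_config x.+1 y -> R) :
  \sum_(w : s6v_config x.+1 y) F w =
  \sum_(w : s6v_config x y) \sum_(b : bool) \sum_(col : {ffun 'I_y -> bool * bool})
    F (add_column_config w b col).
Proof.
rewrite !big_s6v_config; apply: eq_bigr => l _.
rewrite big_rcons_ffun; apply: eq_bigr => bb _.
by under eq_bigr do rewrite big_add_column; rewrite exchange_big.
Qed.

Lemma in_left_add_column x y (w : s6v_config x y) b col i j :
  (i <= x)%N -> in_left (add_column_config w b col) i j = in_left w i j.
Proof. by case: i => //= i lt_ix; rewrite out_at_add_column. Qed.

Lemma in_below_add_column x y (w : s6v_config x y) b col (i : 'I_x) j :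
  in_below (add_column_config w b col) (widen_ord (leqnSn x) i) j = in_below w i j.
Proof. by case: j => /= [|j]; rewrite ?getf_rcons_ffun ?out_at_add_column. Qed.

Lemma in_below_add_column_last x y (w : s6v_config x y) b col j :
  in_below (add_column_config w b col) x j = column_below b col j.
Proof. by case: j => /= [|j]; rewrite ?getf_rcons_ffun_last ?out_at_add_column_last. Qed.

Lemma right_outputs_add_column x y (w : s6v_config x y) b col :
  right_outputs (add_column_config w b col) = column_right col.
Proof. by apply/ffunP => j; rewrite !ffunE /= out_at_add_column_last getfE. Qed.

Lemma s6v_weight_add_column (R : realType) (d1 d2 a1 a2 : R) x y (w : s6v_config x y) b col :
  s6v_weight d1 d2 a1 a2 (add_column_config w b col) =
  s6v_weight d1 d2 a1 a2 w * bern a2 b * column_weight d1 d2 (right_outputs w) b col.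
Proof.
have prod_pair n (F : 'I_n * 'I_y -> R) : \prod_p F p = \prod_(i < n) \prod_(j < y) F (i, j).
  by rewrite pair_bigA; apply: eq_bigr => -[].
rewrite /s6v_weight prod_rcons_ffun !prod_pair big_ord_recr.
under [X in _ * (X * _) = _]eq_bigr => i _ do under eq_bigr => j _ do
  rewrite in_below_add_column in_left_add_column ?leq_ord // add_column_widen.
under [X in _ * (_ * X) = _]eq_bigr => j _ do
  rewrite in_below_add_column_last in_left_add_column ?leq_ord // add_column_max.
rewrite /column_weight; under [X in _ = _ * X]eq_bigr do rewrite ffunE.
ring.
Qed.

Section Burke.

Variables (R : realType) (d1 d2 b1 b2 : R).
Hypothesis stationary : b1 * (1 - b2) * (1 - d2) = b2 * (1 - b1) * (1 - d1).

Lemma vertex_burke (u r : bool) :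
  \sum_(t : bool) \sum_(l : bool) bern b2 t * bern b1 l * vertex_weight d1 d2 t l u r =
  bern b2 u * bern b1 r.
Proof. by have := stationary; rewrite !big_bool /=; case: u; case: r => /=; lra. Qed.

Lemma column_burke y (g : {ffun 'I_y -> bool} -> bool -> R) :
  \sum_(r : {ffun 'I_y -> bool}) \sum_(b : bool) \sum_(o : {ffun 'I_y -> bool * bool})
    bern_prod b1 r * bern b2 b * column_weight d1 d2 r b o *
    g (column_right o) (column_below b o y) =
  \sum_(r : {ffun 'I_y -> bool}) \sum_(t : bool) bern_prod b1 r * bern b2 t * g r t.
Proof.
elim: y g => [|y IH] g.
  apply: eq_bigr => r _; apply: eq_bigr => b _.
  rewrite (big_ffun_card0 _ [ffun => (false, false)]) ?card_ord //.
  by rewrite /column_weight big_ord0 (eq_ffun_card0 (column_right _) r) ?card_ord //=; ring.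
(* [g'] integrates [g] against the top vertex, fed by [t] from below. *)
pose g' r t := \sum_(l : bool) \sum_(v : bool * bool)
  bern b1 l * vertex_weight d1 d2 t l v.1 v.2 * g (rcons_ffun r v.2) v.1.
transitivity (\sum_(r : {ffun 'I_y -> bool}) \sum_(b : bool) \sum_(o : {ffun 'I_y -> bool * bool})
    bern_prod b1 r * bern b2 b * column_weight d1 d2 r b o *
    g' (column_right o) (column_below b o y)).
  rewrite big_rcons_ffun; apply: eq_bigr => r _.
  rewrite exchange_big; apply: eq_bigr => b _.
  under eq_bigr do rewrite big_rcons_ffun.
  rewrite exchange_big; apply: eq_bigr => o _.
  rewrite /g' mulr_sumr; apply: eq_bigr => l _; rewrite mulr_sumr; apply: eq_bigr => v _.
  rewrite /bern_prod prod_rcons_ffun column_weight_rcons column_right_rcons.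
  by rewrite column_below_rcons_top; ring.
rewrite IH big_rcons_ffun; apply: eq_bigr => r _.
transitivity (\sum_(v : bool * bool) bern_prod b1 r * g (rcons_ffun r v.2) v.1 *
    \sum_(t : bool) \sum_(l : bool) bern b2 t * bern b1 l * vertex_weight d1 d2 t l v.1 v.2).
  under [RHS]eq_bigr do rewrite mulr_sumr.
  rewrite exchange_big; apply: eq_bigr => t _.
  under [RHS]eq_bigr do rewrite mulr_sumr.
  rewrite exchange_big /g' mulr_sumr; apply: eq_bigr => l _.
  by rewrite mulr_sumr; apply: eq_bigr => v _; ring.
under eq_bigr do rewrite vertex_burke.
rewrite exchange_big pair_bigA; apply: eq_bigr => -[t l] _ /=.
by rewrite /bern_prod prod_rcons_ffun; ring.
Qed.

Lemma box_burke x y (G : {ffun 'I_y -> bool} -> R) :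
  \sum_(w : s6v_config x y) s6v_weight d1 d2 b1 b2 w * G (right_outputs w) =
  \sum_(r : {ffun 'I_y -> bool}) bern_prod b1 r * G r.
Proof.
elim: x G => [|x IH] G.
  rewrite big_s6v_config; apply: eq_bigr => l _.
  rewrite (big_ffun_card0 _ [ffun => false]) ?card_ord //.
  rewrite (big_ffun_card0 _ [ffun => (false, false)]) ?card_prod ?card_ord //.
  rewrite /s6v_weight big_ord0 [\prod_(p : 'I_0 * 'I_y) _]big1 => [|[[]]] //.
  by rewrite !mulr1 right_outputs0.
pose G' r := \sum_(b : bool) \sum_(col : {ffun 'I_y -> bool * bool})
  bern b2 b * column_weight d1 d2 r b col * G (column_right col).
transitivity (\sum_(w : s6v_config x y) s6v_weight d1 d2 b1 b2 w * G' (right_outputs w)).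
  rewrite big_s6v_config_add_column; apply: eq_bigr => w _.
  rewrite /G' mulr_sumr; apply: eq_bigr => b _; rewrite mulr_sumr; apply: eq_bigr => col _.
  by rewrite s6v_weight_add_column right_outputs_add_column; ring.
rewrite IH.
transitivity (\sum_(r : {ffun 'I_y -> bool}) \sum_(t : bool) bern_prod b1 r * bern b2 t * G r).
  rewrite -(column_burke (fun r _ => G r)); apply: eq_bigr => r _.
  rewrite /G' mulr_sumr; apply: eq_bigr => b _; rewrite mulr_sumr; apply: eq_bigr => col _.
  by ring.
by apply: eq_bigr => r _; rewrite big_bool /=; ring.
Qed.

End Burke.

Lemma bern_tilt (R : realType) (a s : R) (b : bool) :
  s * a + (1 - a) != 0 ->
  bern a b * s ^+ b = (s * a + (1 - a)) * bern (s * a / (s * a + (1 - a))) b.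
Proof. by move=> c_neq0; case: b => /=; field. Qed.

Lemma s6v_weight_tilt (R : realType) (d1 d2 a1 a2 s : R) x y (w : s6v_config x y) :
  s * a2 + (1 - a2) != 0 ->
  s6v_weight d1 d2 a1 a2 w * \prod_(i < x) s ^+ w.1.2 i =
  (s * a2 + (1 - a2)) ^+ x * s6v_weight d1 d2 a1 (s * a2 / (s * a2 + (1 - a2))) w.
Proof.
move=> c_neq0; rewrite /s6v_weight mulrAC -[_ * _ * \prod_(i < x) _]mulrA -big_split /=.
under [X in _ * X * _ = _]eq_bigr do rewrite bern_tilt //.
by rewrite big_split prodr_const card_ord /=; ring.
Qed.

Lemma expR_height (R : realType) (eps : R) x y (w : s6v_config x y) : (0 < x)%N ->
  expR (eps * (height w)%:~R) =
  (\prod_(j < y) expR eps ^+ right_outputs w j) * \prod_(i < x) expR (- eps) ^+ w.1.2 i.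
Proof.
case: x w => // x w _.
rewrite /height intrB -!pmulrn !natr_sum mulrBr -mulNr !mulr_sumr expRD !expR_sum.
by congr (_ * _); apply: eq_bigr => j _; rewrite expRM_natr ?ffunE.
Qed.

Lemma sum_bern_prod_pow (R : realType) (a s : R) n :
  \sum_(r : {ffun 'I_n -> bool}) bern_prod a r * \prod_(j < n) s ^+ r j =
  (s * a + (1 - a)) ^+ n.
Proof.
have sum_bool : \sum_(b : bool) bern a b * s ^+ b = s * a + (1 - a).
  by rewrite big_bool /=; ring.
under eq_bigr do rewrite -big_split.
by rewrite -(bigA_distr_bigA (fun _ b => bern a b * s ^+ b)) sum_bool prodr_const card_ord.
Qed.

Lemma tilt_stationary (R : realType) (d1 d2 a1 a2 eps : R) :
  1 - a1 != 0 -> 1 - a2 != 0 -> 1 - d2 != 0 -> expR (- eps) * a2 + (1 - a2) != 0 ->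
  expR eps * (a1 / (1 - a1)) = (1 - d1) / (1 - d2) * (a2 / (1 - a2)) ->
  let a2' := expR (- eps) * a2 / (expR (- eps) * a2 + (1 - a2)) in
  a1 * (1 - a2') * (1 - d2) = a2' * (1 - a1) * (1 - d1).
Proof.
move=> a1_neq1 a2_neq1 d2_neq1 c_neq0 balance a2'.
have cleared : a1 * (1 - a2) * (1 - d2) = expR (- eps) * (a2 * (1 - a1) * (1 - d1)).
  have expRNK : expR (- eps) * expR eps = 1 by rewrite -expRD addNr expR0.
  transitivity (expR (- eps) * (expR eps * (a1 / (1 - a1))) *
                ((1 - a1) * (1 - a2) * (1 - d2))).
    by rewrite mulrA expRNK mul1r; field; rewrite a1_neq1.
  by rewrite balance; field; rewrite a2_neq1 d2_neq1.
transitivity (a1 * (1 - a2) * (1 - d2) / (expR (- eps) * a2 + (1 - a2))).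
  by rewrite /a2'; field.
by rewrite cleared /a2'; field.
Qed.

Theorem lemma3p2 (R : realType) (d1 d2 a1 a2 eps : R) :
  0 < d1 < 1 -> 0 < d2 < 1 -> 0 < a1 < 1 -> 0 < a2 < 1 ->
  expR eps * (a1 / (1 - a1)) = (1 - d1) / (1 - d2) * (a2 / (1 - a2)) ->
  forall x y : nat, (0 < x)%N -> (0 < y)%N ->
  exp_height_moment d1 d2 a1 a2 eps x y =
    (expR eps * a1 + (1 - a1)) ^+ y * (expR (- eps) * a2 + (1 - a2)) ^+ x.
Proof.
move=> _ /andP[_ d2_lt1] /andP[_ a1_lt1] /andP[a2_gt0 a2_lt1] balance x y x_gt0 _.
have sub1_neq0 (z : R) : z < 1 -> 1 - z != 0 by move=> z_lt1; rewrite subr_eq0 gt_eqF.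
have c_neq0 : expR (- eps) * a2 + (1 - a2) != 0.
  by rewrite gt_eqF // addr_gt0 ?mulr_gt0 ?expR_gt0 ?subr_gt0.
have stationary := tilt_stationary
  (sub1_neq0 _ a1_lt1) (sub1_neq0 _ a2_lt1) (sub1_neq0 _ d2_lt1) c_neq0 balance.
rewrite /exp_height_moment.
under eq_bigr do rewrite (expR_height _ _ x_gt0) mulrA mulrAC s6v_weight_tilt //.
under eq_bigr do rewrite -[_ ^+ x * _ * _]mulrA.
rewrite -mulr_sumr (box_burke stationary _ (fun r => \prod_(j < y) expR eps ^+ r j)).
by rewrite sum_bern_prod_pow mulrC.
Qed.
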